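(* Let $\texttt{ALG}$ be an online non-preemptive scheduler for the serial-parallel scheduling problem on $p$ processors, fix a constant $c>0$, and let $R\in\mathbb{N}$. Then there exists a task arrival process $\mathcal{T}$ on which the competitive ratio of $\texttt{ALG}$ with $c$ speed augmentation for mean response time is $\Omega(R)$, i.e., $\mathrm{TRT}^{\mathcal{T}}_{\texttt{ALG}}\ge\Omega(R)\cdot\mathrm{TRT}^{c\cdot\mathcal{T}}_{\texttt{OPT}}$. In particular $\texttt{ALG}$ can perform arbitrarily worse than $\texttt{OPT}$.
   Context: Serial-parallel scheduling problem: $p$ identical processors. A task arrival process is a finite set of tasks $\tau_i=(\sigma_i,\pi_i,t_i)$, $i=1,\dots,n$, with arrival time $t_i\ge0$, serial work $\sigma_i\ge0$ and parallel work $\pi_i$, with $1\le\pi_i/\sigma_i\le p$ when $\sigma_i>0$. A task is performed either by its serial job (work $\sigma_i$, at most one processor at any instant) or by its parallel job (work $\pi_i$, any number of processors, rate equal to number of processors); time is continuous. A scheduler is non-preemptive if the number of processors it assigns to each task is fixed for the full duration during which the task executes. Total response time $\mathrm{TRT}=\sum_i(f_i-t_i)$ with $f_i$ the completion time; mean response time is $\mathrm{TRT}/n$. $\mathrm{TRT}^{\mathcal{T}}_{\texttt{OPT}}$ is the optimal offline (preemptive) total response time. For $c>0$, $c\cdot\mathcal{T}$ is $\mathcal{T}$ with all works multiplied by $c$; comparing $\mathrm{TRT}_{\texttt{ALG}}^{\mathcal{T}}$ with $\mathrm{TRT}_{\texttt{OPT}}^{c\cdot\mathcal{T}}$ means $\texttt{ALG}$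 has $c$ speed augmentation. Competitive ratio here is worst-case. *)

From HB Require Import structures.
From mathcomp Require Import all_boot all_order all_algebra.
From mathcomp Require Import classical_sets boolp reals Rstruct.
Set Implicit Arguments. Unset Strict Implicit. Unset Printing Implicit Defensive.
Import Order.TTheory GRing.Theory Num.Theory.
Local Open Scope ring_scope.
Local Open Scope classical_set_scope.

(* A task (sigma, pi, t): serial work, parallel work, arrival time. *)
Notation R := Rdefinitions.R.
Record task := Task { sigma : R; pi : R; arr : R }.
Definition dtask : task := Task 0 0 0.

Definition process := seq task.
Definition tk (T : process) (i : nat) : task := nth dtask T i.

Definition valid_task (p : nat) (x : task) : Prop :=
  0 <= arr x /\ 0 <= sigma x /\ 0 <= pi x /\
  (0 < sigma x -> sigma x <= pi x /\ pi x <= p%:R * sigma x).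
Definition valid_process (p : nat) (T : process) : Prop :=
  forall i, (i < size T)%N -> valid_task p (tk T i).

Definition scale (c : R) (T : process) : process :=
  map (fun x => Task (c * sigma x) (c * pi x) (arr x)) T.

Definition work (x : task) (par : bool) : R := if par then pi x else sigma x.

Record np_decision := NPDec { start : R; procs : nat; par : bool }.
Definition np_schedule := nat -> np_decision.

Definition np_finish (T : process) (S : np_schedule) (i : nat) : R :=
  start (S i) + work (tk T i) (par (S i)) / (procs (S i))%:R.

Definition np_feasible (p : nat) (T : process) (S : np_schedule) : Prop :=
  (forall i, (i < size T)%N ->
     arr (tk T i) <= start (S i) /\ (0 < procs (S i))%N /\
     (~~ par (S i) -> procs (S i) = 1%N)) /\
  (forall tau : R,
     (\sum_(i < size T | ((start (S i) <= tau)%R && (tau < np_finish T S i)%R))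
        procs (S i) <= p)%N).

Definition TRT_np (T : process) (S : np_schedule) : R :=
  \sum_(i < size T) (np_finish T S i - arr (tk T i)).

(* An online non-preemptive scheduler: maps each arrival process to a feasible
   non-preemptive schedule, and its decisions taken up to time t do not depend
   on tasks arriving after time t. *)
Definition online_np_scheduler (p : nat) (ALG : process -> np_schedule) : Prop :=
  (forall T, valid_process p T -> np_feasible p T (ALG T)) /\
  (forall (T E : process) (t : R),
     valid_process p T -> valid_process p (T ++ E) ->
     (forall j, (j < size E)%N -> t < arr (tk E j)) ->
     forall i, (i < size T)%N ->
       (start (ALG T i) <= t \/ start (ALG (T ++ E) i) <= t) ->
       ALG (T ++ E) i = ALG T i).

Definition TRT_ALG (ALG : process -> np_schedule) (T : process) : R :=
  TRT_np T (ALG T).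

(* Time is cut by breakpoints b 0 <= b 1 <= ... <= b m; on [b j, b (j+1))
   task i receives [alloc j i] processors; [mode i] chooses the job;
   [fin i] is the completion time. *)
Record pschedule := PSched {
  nseg : nat; bp : nat -> R; alloc : nat -> nat -> nat;
  mode : nat -> bool; fin : nat -> R }.

Definition done (S : pschedule) (i : nat) (tau : R) : R :=
  \sum_(j < nseg S)
    (alloc S j i)%:R * Num.max 0 (Num.min tau (bp S j.+1) - bp S j).

Definition p_feasible (p : nat) (T : process) (S : pschedule) : Prop :=
  (forall j, (j < nseg S)%N -> bp S j <= bp S j.+1) /\
  (forall j, (j < nseg S)%N -> (\sum_(i < size T) alloc S j i <= p)%N) /\
  (forall j i, (j < nseg S)%N -> (i < size T)%N ->
      (0 < alloc S j i)%N -> arr (tk T i) <= bp S j) /\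
  (forall j i, (j < nseg S)%N -> (i < size T)%N ->
      ~~ mode S i -> (alloc S j i <= 1)%N) /\
  (forall i, (i < size T)%N ->
      arr (tk T i) <= fin S i /\ work (tk T i) (mode S i) <= done S i (fin S i)).

Definition TRT_p (T : process) (S : pschedule) : R :=
  \sum_(i < size T) (fin S i - arr (tk T i)).

Definition TRT_OPT (p : nat) (T : process) : R :=
  inf [set TRT_p T S | S in [set S | p_feasible p T S]].

(* Call ALG forced to k when some instance, all of whose
   tasks have arrived by time u, makes ALG hold k processors throughout
   [u, u + D].  Release at u + D/4 a flood of N identical tasks of work
   d = D / (2 N^2).  If ALG starts one of them by u + D/2, it holds one more
   processor over a shorter window: the earlier commitments survive because ALG
   is online and non-preemptive.  Otherwise each flood task waits D/4, so ALG
   pays N D/4, while OPT, even on the c-scaled instance, runs the flood first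
   on all p processors and pays a bound independent of N.  At most p processors
   can be held, so after p + 1 floods the second case occurs, and N is chosen
   so large that the ratio exceeds the prescribed factor. *)

From Pilot Require Import Defs.
From mathcomp Require Import all_boot all_order all_algebra.
From mathcomp Require Import classical_sets boolp reals Rstruct.
From mathcomp Require Import ring lra zify.
(* The mathcomp imports shadow the record field [pi] of Defs; restore it. *)
Import Defs.
Import Order.TTheory GRing.Theory Num.Theory.
Set Implicit Arguments. Unset Strict Implicit.
Local Open Scope ring_scope.

Lemma sum_nat_le_const (K : numDomainType) (m n : nat) (F : nat -> K) (x : K) :
  (forall i, (m <= i < n)%N -> F i <= x) -> \sum_(m <= i < n) F i <= (n - m)%:R * x.
Proof. by move=> F_le; rewrite mulr_natl -sumr_const_nat; apply: ler_sum_nat. Qed.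

Lemma const_le_sum_nat (K : numDomainType) (m n : nat) (F : nat -> K) (x : K) :
  (forall i, (m <= i < n)%N -> x <= F i) -> (n - m)%:R * x <= \sum_(m <= i < n) F i.
Proof. by move=> le_F; rewrite mulr_natl -sumr_const_nat; apply: ler_sum_nat. Qed.

Lemma leq_term_sum_nat (m n j : nat) (P : pred nat) (F : nat -> nat) :
  (m <= j < n)%N -> P j -> (F j <= \sum_(m <= i < n | P i) F i)%N.
Proof.
move=> hj Pj; rewrite big_mkcond (bigD1_seq j) ?mem_index_iota ?iota_uniq //=.
by rewrite Pj leq_addr.
Qed.

Lemma clipped_length_add (t a b b' : R) : b <= b' ->
  Num.max 0 (Num.min t b - a) +
  (if a <= b then Num.max 0 (Num.min t b' - b) else 0)
  <= Num.max 0 (Num.min t b' - a).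
Proof.
move=> hb; case: (leP a b) => hab; last first.
  have -> : Num.max 0 (Num.min t b - a) = 0.
    by apply/max_idPl; rewrite subr_le0 ge_min (ltW hab) orbT.
  by rewrite addr0 le_max lexx.
case: (leP t b) => htb.
  rewrite (min_l (le_trans htb hb)).
  have -> : Num.max 0 (t - b) = 0 by apply/max_idPl; rewrite subr_le0.
  by rewrite addr0.
have hmin : b <= Num.min t b' by rewrite le_min hb ltW.
rewrite !max_r ?subr_ge0 ?(le_trans hab) //.
by rewrite addrC addrA subrK.
Qed.

Lemma sum_clipped_lengths_le (b : nat -> R) (a t : R) (m : nat) :
  (forall j, (j < m)%N -> b j <= b j.+1) ->
  \sum_(j < m) (if a <= b j then Num.max 0 (Num.min t (b j.+1) - b j) else 0)
    <= Num.max 0 (Num.min t (b m) - a).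
Proof.
elim: m => [|m IH] hb; first by rewrite big_ord0 le_max lexx.
rewrite big_ord_recr /=; apply: le_trans (clipped_length_add t a (hb m _)) => //.
by rewrite lerD2r; apply: IH => j hj; apply: hb; apply: ltnW.
Qed.

Lemma tk_catl (T E : process) (i : nat) : (i < size T)%N -> tk (T ++ E) i = tk T i.
Proof. by move=> hi; rewrite /tk nth_cat hi. Qed.

Lemma tk_scale (c : R) (S : process) (i : nat) :
  tk (scale c S) i = Task (c * sigma (tk S i)) (c * pi (tk S i)) (arr (tk S i)).
Proof.
rewrite /tk /scale; case: (ltnP i (size S)) => hi; first by rewrite (nth_map dtask).
by rewrite !nth_default ?size_map //= !mulr0.
Qed.

Lemma valid_pi_ge0 (p : nat) (S : process) (i : nat) :
  valid_process p S -> (i < size S)%N -> 0 <= pi (tk S i).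
Proof. by move=> valid_S hi; have [_ [_ []]] := valid_S i hi. Qed.

Lemma valid_sigma_le_work (p : nat) (S : process) (i : nat) (b : bool) :
  valid_process p S -> (i < size S)%N -> sigma (tk S i) <= work (tk S i) b.
Proof.
move=> valid_S hi; have [_ [sigma_ge0 [pi_ge0 par_ok]]] := valid_S i hi.
case: b => //=; have [sigma_gt0 | ] := ltP 0 (sigma (tk S i)); first by case: par_ok.
by move=> sigma_le0; apply: le_trans pi_ge0.
Qed.

Lemma valid_scale (p : nat) (c : R) (S : process) :
  0 < c -> valid_process p S -> valid_process p (scale c S).
Proof.
move=> c_gt0 valid_S i; rewrite size_map => hi; rewrite tk_scale /valid_task /=.
have [arr_ge0 [sigma_ge0 [pi_ge0 par_ok]]] := valid_S i hi.
have c_ge0 := ltW c_gt0.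
split=> //; split; first exact: mulr_ge0.
split; first exact: mulr_ge0.
rewrite pmulr_rgt0 // => /par_ok[sigma_le_pi pi_le].
by rewrite ler_pM2l // mulrCA ler_pM2l.
Qed.

Section OptimalLowerBound.

Variables (p : nat) (T : process) (S : pschedule).
Hypothesis S_feasible : p_feasible p T S.

Lemma alloc_le_p (j i : nat) : (j < nseg S)%N -> (i < size T)%N -> (alloc S j i <= p)%N.
Proof.
have [_ [cap _]] := S_feasible; move=> hj hi.
by apply: leq_trans (cap j hj); rewrite (bigD1 (Ordinal hi)) //= leq_addr.
Qed.

Lemma done_le (i : nat) (t : R) : (i < size T)%N -> arr (tk T i) <= t ->
  done S i t <= p%:R * (t - arr (tk T i)).
Proof.
have [mono [_ [started _]]] := S_feasible; move=> hi ht.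
apply: (@le_trans _ _ (p%:R * \sum_(j < nseg S) (if arr (tk T i) <= bp S j then
      Num.max 0 (Num.min t (bp S j.+1) - bp S j) else 0))).
  rewrite /done mulr_sumr; apply: ler_sum => j _.
  have seg_ge0 : 0 <= Num.max 0 (Num.min t (bp S j.+1) - bp S j) by rewrite le_max lexx.
  case: (posnP (alloc S j i)) => [-> | alloc_gt0].
    by rewrite mul0r; case: ifP => _; rewrite ?mulr0 // mulr_ge0 ?ler0n.
  by rewrite started // ler_wpM2r // ler_nat alloc_le_p.
rewrite ler_wpM2l ?ler0n //; apply: le_trans (sum_clipped_lengths_le _ _ mono) _.
by rewrite ge_max subr_ge0 ht lerB // ge_min lexx.
Qed.

Lemma work_le_response (i : nat) : (i < size T)%N ->
  work (tk T i) (mode S i) <= p%:R * (fin S i - arr (tk T i)).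
Proof.
have [_ [_ [_ [_ fin_ok]]]] := S_feasible; move=> hi.
have [arr_le_fin work_done] := fin_ok i hi.
exact: le_trans work_done (done_le hi arr_le_fin).
Qed.

Lemma response_le_TRT_p (i : nat) : (i < size T)%N -> fin S i - arr (tk T i) <= TRT_p T S.
Proof.
have [_ [_ [_ [_ fin_ok]]]] := S_feasible; move=> hi.
rewrite /TRT_p (bigD1 (Ordinal hi)) //= lerDl.
by apply: sumr_ge0 => j _; rewrite subr_ge0; case: (fin_ok j (ltn_ord j)).
Qed.

Lemma TRT_p_ge0 : 0 <= TRT_p T S.
Proof.
have [_ [_ [_ [_ fin_ok]]]] := S_feasible.
by apply: sumr_ge0 => i _; rewrite subr_ge0; case: (fin_ok i (ltn_ord i)).
Qed.

End OptimalLowerBound.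

Lemma TRT_OPT_ge (p : nat) (T : process) (S : pschedule) (i : nat) :
  (0 < p)%N -> valid_process p T -> p_feasible p T S -> (i < size T)%N ->
  sigma (tk T i) / p%:R <= TRT_OPT p T.
Proof.
move=> p_gt0 valid_T feasible hi.
apply: lb_le_inf; first by exists (TRT_p T S), S.
move=> _ [S' feasible' <-]; apply: le_trans (response_le_TRT_p feasible' hi).
rewrite ler_pdivrMr ?ltr0n // mulrC; apply: le_trans (work_le_response feasible' hi).
exact: valid_sigma_le_work valid_T hi.
Qed.

Definition tail_work (S : process) (i : nat) : R := \sum_(i <= l < size S) pi (tk S l).

Section TailWork.

Variable S : process.
Hypothesis pi_ge0 : forall l, (l < size S)%N -> 0 <= pi (tk S l).

Lemma tail_workS (i : nat) : (i < size S)%N -> tail_work S i = pi (tk S i) + tail_work S i.+1.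
Proof. by move=> hi; rewrite /tail_work big_ltn. Qed.

Lemma tail_work_ge0 (i : nat) : 0 <= tail_work S i.
Proof.
rewrite /tail_work big_nat_cond; apply: sumr_ge0 => l /andP[/andP[_ hl] _].
exact: pi_ge0.
Qed.

Lemma tail_work_le0 (i : nat) : tail_work S i <= tail_work S 0.
Proof.
case: (leqP i (size S)) => hi; last by rewrite /tail_work big_geq ?(ltnW hi) ?tail_work_ge0.
rewrite {2}/tail_work (big_cat_nat (leq0n i) hi) /= lerDr big_nat_cond.
by apply: sumr_ge0 => l /andP[/andP[_ hl] _]; apply: pi_ge0; apply: leq_trans hl hi.
Qed.

End TailWork.

Lemma tail_work_scale (c : R) (S : process) (i : nat) :
  tail_work (scale c S) i = c * tail_work S i.
Proof. by rewrite /tail_work size_map mulr_sumr; apply: eq_bigr => l _; rewrite tk_scale. Qed.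

(* All p processors run the tasks one at a time, from the last to the first,
   starting at time A, so that task i completes at A + tail_work S i / p. *)
Definition backward_schedule (p : nat) (S : process) (A : R) : pschedule :=
  PSched (size S) (fun j => A + tail_work S (size S - j) / p%:R)
    (fun j i => if i == (size S - j.+1)%N then p else 0%N)
    (fun _ => true) (fun i => A + tail_work S i / p%:R).

Section BackwardSchedule.

Variables (p : nat) (S : process) (A : R).
Hypotheses (p_gt0 : (0 < p)%N) (valid_S : valid_process p S)
  (arr_le : forall l, (l < size S)%N -> arr (tk S l) <= A).

Let pi_ge0 l : (l < size S)%N -> 0 <= pi (tk S l) := valid_pi_ge0 valid_S.

Let pi_div_ge0 l : (l < size S)%N -> 0 <= pi (tk S l) / p%:R.
Proof. by move=> hl; rewrite divr_ge0 ?pi_ge0 ?ler0n. Qed.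

Let tail_work_div_ge0 (i : nat) : 0 <= tail_work S i / p%:R.
Proof. by rewrite divr_ge0 ?tail_work_ge0 ?ler0n. Qed.

Lemma backward_breakpointS (j : nat) : (j < size S)%N ->
  bp (backward_schedule p S A) j.+1 =
  bp (backward_schedule p S A) j + pi (tk S (size S - j.+1)) / p%:R.
Proof.
move=> hj /=; have -> : (size S - j = (size S - j.+1).+1)%N by lia.
rewrite tail_workS; last by lia.
by rewrite mulrDl addrA addrAC.
Qed.

Lemma backward_schedule_feasible : p_feasible p S (backward_schedule p S A).
Proof.
split; [|split; [|split; [|split]]] => //.
- move=> j hj; rewrite backward_breakpointS // lerDl pi_div_ge0 //; move: hj => /=; lia.
- move=> j /= hj; have hl : (size S - j.+1 < size S)%N by lia.
  rewrite (bigD1 (Ordinal hl)) //= eqxx big1 ?addn0 // => i neq_i.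
  by case: eqP => // eq_i; case/eqP: neq_i; apply: val_inj.
- move=> j i _ hi _.
  by apply: le_trans (arr_le hi) _; rewrite lerDl tail_work_div_ge0.
move=> i hi; split; first by apply: le_trans (arr_le hi) _; rewrite lerDl tail_work_div_ge0.
have hl : (size S - i.+1 < size S)%N by lia.
rewrite /done (bigD1 (Ordinal hl)) //=.
have -> : (size S - (size S - i.+1) = i.+1)%N by lia.
have -> : (size S - (size S - i.+1).+1 = i)%N by lia.
rewrite eqxx minxx (tail_workS hi) mulrDl.
set x := pi _ / _; set y := tail_work _ _ / _.
rewrite [A + (x + y)]addrCA addrK max_r ?pi_div_ge0 // mulrC divfK ?pnatr_eq0 -?lt0n //.
rewrite lerDl; apply: sumr_ge0 => j _.
by rewrite mulr_ge0 ?ler0n ?le_max ?lexx.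
Qed.

Lemma TRT_OPT_le_backward :
  TRT_OPT p S <= \sum_(0 <= i < size S) (A + tail_work S i / p%:R - arr (tk S i)).
Proof.
rewrite big_mkord; apply: ge_inf.
  by exists 0 => _ [sch feasible <-]; apply: TRT_p_ge0 feasible.
by exists (backward_schedule p S A) => //; apply: backward_schedule_feasible.
Qed.

End BackwardSchedule.

Lemma TRT_OPT_scale_gt0 (p : nat) (c A : R) (T : process) (i : nat) :
  (0 < p)%N -> 0 < c -> valid_process p T ->
  (forall l, (l < size T)%N -> arr (tk T l) <= A) ->
  (i < size T)%N -> 0 < sigma (tk T i) -> 0 < TRT_OPT p (scale c T).
Proof.
move=> p_gt0 c_gt0 valid_T arr_le hi sigma_gt0.
have valid_cT := valid_scale c_gt0 valid_T.
have arr_le' l : (l < size (scale c T))%N -> arr (tk (scale c T) l) <= A.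
  by rewrite size_map tk_scale; apply: arr_le.
have hi' : (i < size (scale c T))%N by rewrite size_map.
have feasible := backward_schedule_feasible p_gt0 valid_cT arr_le'.
apply: lt_le_trans (TRT_OPT_ge p_gt0 valid_cT feasible hi').
by rewrite tk_scale divr_gt0 ?mulr_gt0 ?ltr0n.
Qed.

Definition flood_task (a d : R) : task := Task d d a.
Definition flood (N : nat) (a d : R) : process := nseq N (flood_task a d).

Section Flood.

Variables (T : process) (N : nat) (a d : R).

Lemma size_cat_flood : size (T ++ flood N a d) = (size T + N)%N.
Proof. by rewrite size_cat size_nseq. Qed.

Lemma tk_cat_flood (i : nat) : (size T <= i < size T + N)%N ->
  tk (T ++ flood N a d) i = flood_task a d.
Proof.
by move=> /andP[h1 h2]; rewrite /tk nth_cat ltnNge h1 /= nth_nseq; case: ifP => //; lia.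
Qed.

Lemma valid_cat_flood (p : nat) : (0 < p)%N -> valid_process p T -> 0 <= a -> 0 < d ->
  valid_process p (T ++ flood N a d).
Proof.
move=> p_gt0 valid_T a_ge0 d_gt0 i; rewrite size_cat_flood => hi.
case: (ltnP i (size T)) => hiT; first by rewrite tk_catl //; apply: valid_T.
rewrite tk_cat_flood ?hiT //; do 3?split => //; try exact: ltW.
by move=> _; rewrite lexx ler_peMl ?ler1n ?ltW.
Qed.

Lemma arr_cat_flood_le (A : R) : (forall i, (i < size T)%N -> arr (tk T i) <= A) -> a <= A ->
  forall i, (i < size (T ++ flood N a d))%N -> arr (tk (T ++ flood N a d) i) <= A.
Proof.
move=> arr_le a_le i; rewrite size_cat_flood => hi.
case: (ltnP i (size T)) => hiT; first by rewrite tk_catl ?arr_le.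
by rewrite tk_cat_flood ?hiT.
Qed.

Lemma tail_work_cat_flood (i : nat) : (size T <= i)%N ->
  tail_work (T ++ flood N a d) i = (size T + N - i)%:R * d.
Proof.
move=> hi; rewrite /tail_work size_cat_flood mulr_natl -sumr_const_nat.
by apply: eq_big_nat => l hl; rewrite tk_cat_flood //; move: hl; lia.
Qed.

Lemma tail_work_cat_flood0 : tail_work (T ++ flood N a d) 0 = tail_work T 0 + N%:R * d.
Proof.
have split_T : (size T <= size (T ++ flood N a d))%N by rewrite size_cat leq_addr.
rewrite {1}/tail_work (big_cat_nat (leq0n _) split_T) /= -/(tail_work _ (size T)).
rewrite tail_work_cat_flood // addKn; congr (_ + _).
by apply: eq_big_nat => l /andP[_ hl]; rewrite tk_catl.
Qed.

(* The tasks of T wait for at most all the work, the flood tasks only for the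
   flood itself, which the backward schedule runs first. *)
Lemma TRT_OPT_cat_flood_le (p : nat) (c : R) :
  (0 < p)%N -> 0 < c -> valid_process p T ->
  (forall i, (i < size T)%N -> arr (tk T i) <= a) -> 0 <= a -> 0 < d ->
  TRT_OPT p (scale c (T ++ flood N a d)) <=
  (size T)%:R * (a + c * (tail_work T 0 + N%:R * d) / p%:R)
  + N%:R * (c * (N%:R * d) / p%:R).
Proof.
move=> p_gt0 c_gt0 valid_T arr_le a_ge0 d_gt0; have c_ge0 := ltW c_gt0.
set T' := T ++ flood N a d.
have valid_T' : valid_process p T' by apply: valid_cat_flood.
have arr_le' l : (l < size (scale c T'))%N -> arr (tk (scale c T') l) <= a.
  by rewrite size_map tk_scale; apply: arr_cat_flood_le.
have p_inv_ge0 : 0 <= (p%:R : R)^-1 by rewrite invr_ge0 ler0n.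
apply: le_trans (TRT_OPT_le_backward p_gt0 (valid_scale c_gt0 valid_T') arr_le') _.
rewrite size_map size_cat_flood (big_cat_nat (leq0n (size T))) ?leq_addr //=.
apply: lerD.
  rewrite -[in X in _ <= X](subn0 (size T)); apply: sum_nat_le_const => i /andP[_ hi].
  rewrite tail_work_scale tk_scale /= -tail_work_cat_flood0 -/T'.
  rewrite -[X in _ <= X]subr0 lerB //; last by rewrite tk_catl //; have [] := valid_T i hi.
  by rewrite lerD2l ler_wpM2r // ler_wpM2l // tail_work_le0 // => l; apply: valid_pi_ge0 valid_T'.
rewrite -[in X in _ <= X](addKn (size T) N); apply: sum_nat_le_const => i hi.
rewrite tail_work_scale tk_scale tk_cat_flood //= addrAC subrr add0r.
rewrite tail_work_cat_flood; last by case/andP: hi.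
rewrite ler_wpM2r // ler_wpM2l // ler_wpM2r ?(ltW d_gt0) // ler_nat.
by move: hi; lia.
Qed.

End Flood.

Lemma np_response (p : nat) (T : process) (S : np_schedule) (i : nat) :
  valid_process p T -> np_feasible p T S -> (i < size T)%N ->
  [/\ arr (tk T i) <= start (S i), (0 < procs (S i))%N & start (S i) <= np_finish T S i].
Proof.
move=> valid_T [ok _] hi; have [arr_le [procs_gt0 _]] := ok i hi.
split=> //; rewrite /np_finish lerDl divr_ge0 ?ler0n //.
by have [_ [? [? _]]] := valid_T i hi; case: (par (S i)).
Qed.

Lemma TRT_np_ge_tail (p : nat) (T : process) (S : np_schedule) (m : nat) :
  valid_process p T -> np_feasible p T S -> (m <= size T)%N ->
  \sum_(m <= i < size T) (np_finish T S i - arr (tk T i)) <= TRT_np T S.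
Proof.
move=> valid_T feasible hm.
have resp_ge0 i : (i < size T)%N -> 0 <= np_finish T S i - arr (tk T i).
  move=> hi; have [arr_le _ start_le] := np_response valid_T feasible hi.
  by rewrite subr_ge0 (le_trans arr_le start_le).
rewrite /TRT_np -(big_mkord xpredT (fun i => np_finish T S i - arr (tk T i))).
rewrite (big_cat_nat (leq0n m) hm) /= lerDr big_nat_cond sumr_ge0 // => i.
by move=> /andP[/andP[_ hi] _]; apply: resp_ge0; apply: leq_trans hi hm.
Qed.

Definition running (T : process) (S : np_schedule) (u D : R) (i : nat) : bool :=
  (start (S i) <= u) && (u + D <= np_finish T S i).

Definition busy (T : process) (S : np_schedule) (u D : R) : nat :=
  \sum_(0 <= i < size T | running T S u D i) procs (S i).

Lemma busy_le (p : nat) (T : process) (S : np_schedule) (u D : R) :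
  np_feasible p T S -> 0 < D -> (busy T S u D <= p)%N.
Proof.
move=> [_ cap] D_gt0; apply: leq_trans (cap u).
rewrite /busy big_mkord big_mkcond [X in (_ <= X)%N]big_mkcond /=.
apply: leq_sum => i _; rewrite /running; case: (start (S i) <= u) => //=.
by case: ifP => // fin_ge; rewrite (lt_le_trans _ fin_ge) // ltrDl.
Qed.

Section Adversary.

Variables (p : nat) (ALG : process -> np_schedule) (c M : R).
Hypotheses (p_gt0 : (0 < p)%N) (ALG_online : online_np_scheduler p ALG)
  (c_gt0 : 0 < c) (M_ge0 : 0 <= M).

Let ALG_feasible (T : process) : valid_process p T -> np_feasible p T (ALG T) :=
  ALG_online.1 T.

Definition bad_instance (T : process) : Prop :=
  [/\ valid_process p T, 0 < TRT_OPT p (scale c T) &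
      M * TRT_OPT p (scale c T) <= TRT_ALG ALG T].

Definition forced_busy (k : nat) : Prop :=
  exists (T : process) (u D : R), [/\ valid_process p T, 0 <= u, 0 < D,
    forall i, (i < size T)%N -> arr (tk T i) <= u & (k <= busy T (ALG T) u D)%N].

Section Extension.

Variables (T E : process) (u D tau D' : R).
Hypotheses (valid_T : valid_process p T) (valid_TE : valid_process p (T ++ E))
  (E_late : forall j, (j < size E)%N -> u < arr (tk E j))
  (u_le_tau : u <= tau) (tau_D'_le : tau + D' <= u + D).

(* Online: what ALG has started by time u cannot depend on the tasks of E. *)
Lemma running_cat (i : nat) : (i < size T)%N -> running T (ALG T) u D i ->
  running (T ++ E) (ALG (T ++ E)) tau D' i /\ ALG (T ++ E) i = ALG T i.
Proof.
move=> hi /andP[started finishes].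
have same : ALG (T ++ E) i = ALG T i.
  by apply: (ALG_online.2 T E u valid_T valid_TE E_late i hi); left.
split=> //; rewrite /running /np_finish same tk_catl // -/(np_finish T (ALG T) i).
by rewrite (le_trans started u_le_tau) (le_trans tau_D'_le finishes).
Qed.

Lemma busy_cat :
  (busy T (ALG T) u D + \sum_(size T <= i < size (T ++ E) |
     running (T ++ E) (ALG (T ++ E)) tau D' i) procs (ALG (T ++ E) i)
   <= busy (T ++ E) (ALG (T ++ E)) tau D')%N.
Proof.
rewrite {2}/busy (big_cat_nat (leq0n (size T))) ?size_cat ?leq_addr //= leq_add2r.
rewrite /busy big_mkcond [X in (_ <= X)%N]big_mkcond.
rewrite big_nat_cond [X in (_ <= X)%N]big_nat_cond.
apply: leq_sum => i /andP[/andP[_ hi] _]; case: ifP => // run.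
by have [-> ->] := running_cat hi run.
Qed.

End Extension.

Section FloodStep.

Variables (T : process) (u D : R) (k : nat).
Hypotheses (valid_T : valid_process p T) (u_ge0 : 0 <= u) (D_gt0 : 0 < D)
  (arr_le_u : forall i, (i < size T)%N -> arr (tk T i) <= u)
  (busy_T : (k <= busy T (ALG T) u D)%N).

Let a : R := u + D / 4.
Let u_lt_a : u < a. Proof. by rewrite /a ltrDl divr_gt0. Qed.
Let a_ge0 : 0 <= a. Proof. exact: le_trans u_ge0 (ltW u_lt_a). Qed.

Section Flood.

Variables (N : nat) (d : R).
Hypotheses (N_gt0 : (0 < N)%N) (d_gt0 : 0 < d) (flood_volume : N%:R * (N%:R * d) = D / 2).

Let T' := T ++ flood N a d.
Let valid_T' : valid_process p T'. Proof. exact: valid_cat_flood. Qed.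
Let arr_le_a i : (i < size T')%N -> arr (tk T' i) <= a.
Proof. by apply: arr_cat_flood_le => // l hl; apply: le_trans (arr_le_u hl) (ltW u_lt_a). Qed.

Let Nd_le : N%:R * d <= D / 2.
Proof. by rewrite -flood_volume ler_peMl ?mulr_ge0 ?ler1n ?ler0n ?ltW. Qed.

Let d_le : d <= D / 2.
Proof. by apply: le_trans Nd_le; rewrite ler_peMl ?ler1n ?ltW. Qed.

(* A flood task started by u + D/2 holds its processors during [tau, tau + d/q],
   on top of those held by T, which ALG could not revise. *)
Lemma flood_early_start_forced_busy (j : nat) : (size T <= j < size T + N)%N ->
  start (ALG T' j) <= u + D / 2 -> forced_busy k.+1.
Proof.
move=> hj early; have jT' : (j < size T')%N by rewrite size_cat_flood; case/andP: hj.
have [a_le_start q_gt0 _] := np_response valid_T' (ALG_feasible valid_T') jT'.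
rewrite /T' tk_cat_flood //= in a_le_start.
set tau := start (ALG T' j) in early a_le_start *; set q := procs (ALG T' j) in q_gt0.
have dq_le : d / q%:R <= d by rewrite ler_pdivrMr ?ltr0n // ler_peMr ?ler1n ?ltW.
exists T', tau, (d / q%:R); split.
- exact: valid_T'.
- exact: le_trans a_ge0 a_le_start.
- by rewrite divr_gt0 ?ltr0n.
- by move=> i hi; apply: le_trans (arr_le_a hi) a_le_start.
have flood_after_u i : (i < size (flood N a d))%N -> u < arr (tk (flood N a d) i).
  by rewrite size_nseq /tk => hi; rewrite nth_nseq hi.
have tau_le : tau + d / q%:R <= u + D.
  by apply: le_trans (lerD early (le_trans dq_le d_le)) _; rewrite -addrA -splitr.
apply: leq_trans (busy_cat valid_T valid_T' flood_after_u _ tau_le); last first.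
  exact: le_trans (ltW u_lt_a) a_le_start.
rewrite -addn1 leq_add //; apply: leq_trans q_gt0 _; apply: leq_term_sum_nat.
  by rewrite size_cat_flood.
rewrite /running /np_finish /T' tk_cat_flood //.
by case: (par _); apply/andP; split; apply: lexx.
Qed.

Lemma flood_late_start_TRT_ALG_ge :
  (forall j, (size T <= j < size T + N)%N -> u + D / 2 < start (ALG T' j)) ->
  N%:R * (D / 4) <= TRT_ALG ALG T'.
Proof.
move=> late; have feasible := ALG_feasible valid_T'.
have split_T : (size T <= size T')%N by rewrite size_cat_flood leq_addr.
apply: le_trans (TRT_np_ge_tail valid_T' feasible split_T).
rewrite size_cat_flood -[in X in X <= _](addKn (size T) N).
apply: const_le_sum_nat => i hi.
have iT' : (i < size T')%N by rewrite size_cat_flood; case/andP: hi.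
have [_ _ start_le] := np_response valid_T' feasible iT'.
have := late i hi; rewrite /T' tk_cat_flood //= /a; lra.
Qed.

Lemma flood_TRT_OPT_le : TRT_OPT p (scale c T') <=
  (size T)%:R * (a + c * (tail_work T 0 + D / 2) / p%:R) + c * (D / 2) / p%:R.
Proof.
have arr_le i : (i < size T)%N -> arr (tk T i) <= a.
  by move=> hi; apply: le_trans (arr_le_u hi) (ltW u_lt_a).
apply: le_trans (TRT_OPT_cat_flood_le N p_gt0 c_gt0 valid_T arr_le a_ge0 d_gt0) _.
have p_inv_ge0 : 0 <= (p%:R : R)^-1 by rewrite invr_ge0 ler0n.
apply: lerD.
  by rewrite ler_wpM2l ?ler0n // lerD2l ler_wpM2r // ler_wpM2l ?(ltW c_gt0) // lerD2l.
have -> : N%:R * (c * (N%:R * d) / p%:R) = c * (N%:R * (N%:R * d)) / p%:R by ring.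
by rewrite flood_volume.
Qed.

Lemma flood_TRT_OPT_gt0 : 0 < TRT_OPT p (scale c T').
Proof.
have hj : (size T <= size T < size T + N)%N by rewrite leqnn -{1}[size T]addn0 ltn_add2l.
have hi : (size T < size T')%N by rewrite size_cat_flood; case/andP: hj.
apply: (TRT_OPT_scale_gt0 p_gt0 c_gt0 valid_T' arr_le_a hi).
by rewrite /T' tk_cat_flood.
Qed.

End Flood.

Lemma bad_instance_or_forced_busy_succ : (exists T, bad_instance T) \/ forced_busy k.+1.
Proof.
set C := (size T)%:R * (a + c * (tail_work T 0 + D / 2) / p%:R) + c * (D / 2) / p%:R.
have [N N_large] : exists N : nat, M * C / (D / 4) <= N%:R.
  exists (Num.bound `|M * C / (D / 4)|).
  exact: le_trans (ler_norm _) (ltW (archi_boundP (normr_ge0 _))).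
set d := D / 2 / (N.+1 * N.+1)%:R.
have d_gt0 : 0 < d by rewrite !divr_gt0 ?ltr0n.
have flood_volume : N.+1%:R * (N.+1%:R * d) = D / 2.
  by rewrite /d natrM; field; rewrite nat1r pnatr_eq0.
case: (pselect (exists2 j, (size T <= j < size T + N.+1)%N &
                   start (ALG (T ++ flood N.+1 a d) j) <= u + D / 2)).
  by case=> j hj early; right; apply: flood_early_start_forced_busy hj early.
move=> late; left; exists (T ++ flood N.+1 a d); split.
- exact: valid_cat_flood.
- exact: flood_TRT_OPT_gt0.
have all_late j : (size T <= j < size T + N.+1)%N ->
    u + D / 2 < start (ALG (T ++ flood N.+1 a d) j).
  by move=> hj; rewrite ltNge; apply/negP => early; apply: late; exists j.
apply: le_trans (flood_late_start_TRT_ALG_ge d_gt0 all_late).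
apply: le_trans (_ : M * C <= _).
  by rewrite ler_wpM2l // (flood_TRT_OPT_le _ d_gt0 flood_volume).
rewrite -ler_pdivrMr ?divr_gt0 //; apply: le_trans N_large _.
by rewrite ler_nat.
Qed.

End FloodStep.

Lemma not_forced_busy_succ_p : ~ forced_busy p.+1.
Proof.
case=> T [u [D [valid_T _ D_gt0 _ busy_T]]].
by have := leq_trans busy_T (busy_le u (ALG_feasible valid_T) D_gt0); rewrite ltnn.
Qed.

Lemma bad_instance_or_forced_busy (k : nat) : (exists T, bad_instance T) \/ forced_busy k.
Proof.
elim: k => [|k [bad | [T [u [D [valid_T u_ge0 D_gt0 arr_le busy_T]]]]]].
- by right; exists [::], 0, 1; split.
- by left.
- exact: bad_instance_or_forced_busy_succ busy_T.
Qed.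

Lemma exists_bad_instance : exists T, bad_instance T.
Proof. by have [// | /not_forced_busy_succ_p] := bad_instance_or_forced_busy p.+1. Qed.

End Adversary.

Theorem proposition9p2 :
  forall (p : nat), (0 < p)%N ->
  forall ALG : process -> np_schedule, online_np_scheduler p ALG ->
  forall c : R, 0 < c ->
  exists K : R, 0 < K /\
    forall Rn : nat, exists T : process,
      valid_process p T /\
      0 < TRT_OPT p (scale c T) /\
      K * Rn%:R * TRT_OPT p (scale c T) <= TRT_ALG ALG T.
Proof.
move=> p p_gt0 ALG ALG_online c c_gt0; exists 1; split=> // Rn.
have [T [valid_T OPT_gt0 ALG_ge]] := exists_bad_instance p_gt0 ALG_online c_gt0 (ler0n _ Rn).
by exists T; rewrite mul1r.
Qed.
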